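(* Let $u\geq 1$, $a=(-u,-1)$, $b=(u,1)$, $h(x)=-u/x$, and fix $x\in(-u,0)$. Then for all $p\neq 0$ close enough to zero, whenever $y_p>1$ and $(x,y_p)\in B_p(a,b)$, both $y_p$ and $h(x)$ lie in the open interval $(1,\,2h(x)+3)$.
   Context: For $p\neq 0$ and $(x,y)\in\mathbb{R}^2$ let $L_p((x,y))=(|x|^p+|y|^p)^{1/p}$; for $p<0$ this is extended by setting $L_p((x,y))=0$ whenever $x=0$ or $y=0$. The bisector is $B_p(a,b)=\{q\in\mathbb{R}^2: L_p(a-q)=L_p(b-q)\}$. *)

From Stdlib Require Import Reals.
Open Scope R_scope.

(* Real power a^e for a >= 0, with the convention 0^e = 0 (used for e <> 0). *)
Definition rpow (a e : R) : R :=
  if Req_EM_T a 0 then 0 else Rpower a e.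

(* L_p((x,y)) = (|x|^p + |y|^p)^(1/p) for p <> 0;
   for p < 0 it is set to 0 whenever x = 0 or y = 0. *)
Definition Lp (p : R) (q : R * R) : R :=
  let (x, y) := q in
  if Rlt_dec p 0 then
    (if Req_EM_T x 0 then 0 else if Req_EM_T y 0 then 0
     else rpow (rpow (Rabs x) p + rpow (Rabs y) p) (1 / p))
  else rpow (rpow (Rabs x) p + rpow (Rabs y) p) (1 / p).

Definition vsub (a q : R * R) : R * R := (fst a - fst q, snd a - snd q).

Definition in_bisector (p : R) (a b q : R * R) : Prop :=
  Lp p (vsub a q) = Lp p (vsub b q).

(** Put [A = u + x], [B = u - x], [D = y - 1], [h = -u/x] and [D0 = 2h + 2].
    For [y > 1] the bisector equation reads [B^p - A^p = (D + 2)^p - D^p].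
    Bounding the left side from below and the right side from above by the
    tangent lines of [exp] at the points [p ln _], and using
    [ln (D + 2) - ln D < 2 / D], yields [ln B - ln A < 4 / D0] whenever
    [D >= D0] and [|p|] is so small that [(D0 + 2)^p <= 2 A^p] and
    [D0^p <= 2 B^p].  This contradicts [ln B - ln A >= 1 - A / B = 4 / D0],
    so [D < D0], i.e. [y < 2h + 3]. *)

From Stdlib Require Import Reals Lra Psatz.
Open Scope R_scope.

Lemma Rpower_pos s p : 0 < Rpower s p.
Proof. apply exp_pos. Qed.

Lemma exp_tangent_le a b : exp a * (b - a) <= exp b - exp a.
Proof.
  assert (E : exp b = exp a * exp (b - a)) by (rewrite <- exp_plus; f_equal; ring).
  pose proof (exp_ineq1_le (b - a)). pose proof (exp_pos a).
  rewrite E. nra.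
Qed.

Lemma Rpower_sub_ge s t p :
  Rpower s p * (p * (ln t - ln s)) <= Rpower t p - Rpower s p.
Proof.
  unfold Rpower. replace (p * (ln t - ln s)) with (p * ln t - p * ln s) by ring.
  apply exp_tangent_le.
Qed.

Lemma ln_sub_ge s t : 0 < s -> 0 < t -> 1 - s / t <= ln t - ln s.
Proof.
  intros hs ht.
  pose proof (exp_ineq1_le (ln s - ln t)) as H.
  replace (exp (ln s - ln t)) with (s / t) in H
    by (unfold Rminus, Rdiv; rewrite exp_plus, exp_Ropp, !exp_ln; auto).
  lra.
Qed.

Lemma ln_add_sub_lt t c : 0 < t -> 0 < c -> ln (t + c) - ln t < c / t.
Proof.
  intros ht hc.
  assert (hct : 0 < c / t) by (apply Rdiv_lt_0_compat; lra).
  assert (E : t + c = t * (1 + c / t)) by (field; lra).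
  assert (H : ln (1 + c / t) < c / t).
  { rewrite <- (ln_exp (c / t)) at 2.
    apply ln_increasing; [lra|]. apply exp_ineq1. lra. }
  rewrite E, ln_mult by lra. lra.
Qed.

Lemma Rpower_le_mul_ratio s t p : 0 < s <= t -> p <= 1 ->
  Rpower t p <= Rpower s p * (t / s).
Proof.
  intros [hs hst] hp.
  assert (E : t = s * (t / s)) by (field; lra).
  rewrite E at 1. rewrite <- Rpower_mult_distr by (try apply Rdiv_lt_0_compat; lra).
  apply Rmult_le_compat_l; [left; apply Rpower_pos|].
  rewrite <- (Rpower_1 (t / s)) at 2 by (apply Rdiv_lt_0_compat; lra).
  apply Rle_Rpower; [|exact hp].
  apply (Rmult_le_reg_l s); [lra|]. rewrite <- E. lra.
Qed.

Lemma Rpower_le_antimono s t p : 0 < s <= t -> p <= 0 -> Rpower t p <= Rpower s p.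
Proof.
  intros hst hp.
  rewrite <- (Ropp_involutive p), (Rpower_Ropp t), (Rpower_Ropp s).
  apply Rinv_le_contravar; [apply Rpower_pos|].
  apply Rle_Rpower_l; lra.
Qed.

Lemma Rpower_le_2_mul_near_0 s t : 0 < s -> 0 < t ->
  exists delta, 0 < delta /\
    forall p, Rabs p < delta -> Rpower s p <= 2 * Rpower t p.
Proof.
  intros hs ht.
  set (K := Rabs (ln s - ln t) + 1).
  assert (hK : 0 < K) by (pose proof (Rabs_pos (ln s - ln t)); unfold K; lra).
  assert (hln2 : 0 < ln 2) by (pose proof ln_lt_2; lra).
  exists (ln 2 / K). split; [apply Rdiv_lt_0_compat; lra|].
  intros p hp.
  assert (hpK : Rabs p * K < ln 2).
  { apply (Rmult_lt_compat_r K) in hp; [|exact hK].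
    unfold Rdiv in hp. rewrite Rmult_assoc, Rinv_l in hp; lra. }
  assert (hsmall : p * (ln s - ln t) < ln 2).
  { pose proof (Rle_abs (p * (ln s - ln t))) as habs. rewrite Rabs_mult in habs.
    pose proof (Rabs_pos p).
    assert (Rabs p * Rabs (ln s - ln t) <= Rabs p * K)
      by (apply Rmult_le_compat_l; unfold K; lra).
    lra. }
  assert (E : Rpower s p = Rpower t p * exp (p * (ln s - ln t))).
  { unfold Rpower. rewrite <- exp_plus. f_equal. ring. }
  rewrite E, (Rmult_comm 2). apply Rmult_le_compat_l; [left; apply Rpower_pos|].
  rewrite <- (exp_ln 2) by lra. left. apply exp_increasing, hsmall.
Qed.

Section PowerSumEquation.

Variables A B D0 D p : R.
Hypotheses (hD0 : 0 < D0) (hD : D0 <= D).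
Hypothesis heq : Rpower A p + Rpower (D + 2) p = Rpower B p + Rpower D p.

Let hstep : ln (D + 2) - ln D < 2 / D.
Proof. apply ln_add_sub_lt; lra. Qed.

Lemma ln_ratio_lt_pos : 0 < p <= 1 -> Rpower (D0 + 2) p <= 2 * Rpower A p ->
  ln B - ln A < 4 / D0.
Proof.
  intros hp hA2.
  pose proof (Rpower_sub_ge A B p) as htanA.
  pose proof (Rpower_sub_ge (D + 2) D p) as htanC.
  set (a := Rpower A p) in *. set (c := Rpower (D + 2) p) in *.
  assert (ha : 0 < a) by apply Rpower_pos. assert (hc : 0 < c) by apply Rpower_pos.
  assert (hcM : a * (ln B - ln A) < c * (2 / D)).
  { assert (hlog : c * (p * (ln (D + 2) - ln D)) < c * (p * (2 / D))).
    { apply Rmult_lt_compat_l; [exact hc|]. apply Rmult_lt_compat_l; lra. }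
    apply (Rmult_lt_reg_l p); [lra|].
    replace (p * (a * (ln B - ln A))) with (a * (p * (ln B - ln A))) by ring.
    replace (c * (p * (ln D - ln (D + 2)))) with (- (c * (p * (ln (D + 2) - ln D))))
      in htanC by ring.
    replace (p * (c * (2 / D))) with (c * (p * (2 / D))) by ring.
    lra. }
  assert (hc0 : c <= 2 * a * ((D + 2) / (D0 + 2))).
  { apply Rle_trans with (Rpower (D0 + 2) p * ((D + 2) / (D0 + 2))).
    - apply Rpower_le_mul_ratio; lra.
    - apply Rmult_le_compat_r; [apply Rlt_le, Rdiv_lt_0_compat|]; lra. }
  assert (hratio : (D + 2) / (D0 + 2) * (2 / D) <= 2 / D0).
  { apply (Rmult_le_reg_r (D0 * D * (D0 + 2))).
    - apply Rmult_lt_0_compat; [apply Rmult_lt_0_compat|]; lra.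
    - replace ((D + 2) / (D0 + 2) * (2 / D) * (D0 * D * (D0 + 2)))
        with (2 * D0 * (D + 2)) by (field; lra).
      replace (2 / D0 * (D0 * D * (D0 + 2))) with (2 * D * (D0 + 2)) by (field; lra).
      nra. }
  apply (Rmult_lt_reg_l a); [exact ha|].
  apply Rlt_le_trans with (1 := hcM).
  assert (hD2 : 0 < 2 / D) by (apply Rdiv_lt_0_compat; lra).
  replace (a * (4 / D0)) with (2 * a * (2 / D0)) by (field; lra).
  apply Rle_trans with (2 * a * ((D + 2) / (D0 + 2)) * (2 / D)).
  - apply Rmult_le_compat_r; lra.
  - rewrite Rmult_assoc. apply Rmult_le_compat_l; lra.
Qed.

Lemma ln_ratio_lt_neg : p < 0 -> Rpower D0 p <= 2 * Rpower B p ->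
  ln B - ln A < 4 / D0.
Proof.
  intros hp hB2.
  pose proof (Rpower_sub_ge B A p) as htanB.
  pose proof (Rpower_sub_ge D (D + 2) p) as htanD.
  pose proof (Rpower_le_antimono D0 D p ltac:(lra) ltac:(lra)) as hD0D.
  set (b := Rpower B p) in *. set (d := Rpower D p) in *.
  assert (hb : 0 < b) by apply Rpower_pos. assert (hd : 0 < d) by apply Rpower_pos.
  assert (hdM : b * (ln B - ln A) < d * (2 / D)).
  { assert (hlog : d * (- p * (ln (D + 2) - ln D)) < d * (- p * (2 / D))).
    { apply Rmult_lt_compat_l; [exact hd|]. apply Rmult_lt_compat_l; lra. }
    apply (Rmult_lt_reg_l (- p)); [lra|].
    replace (- p * (b * (ln B - ln A))) with (b * (p * (ln A - ln B))) by ring.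
    replace (d * (p * (ln (D + 2) - ln D))) with (- (d * (- p * (ln (D + 2) - ln D))))
      in htanD by ring.
    replace (- p * (d * (2 / D))) with (d * (- p * (2 / D))) by ring.
    lra. }
  assert (hinv : 2 / D <= 2 / D0).
  { apply Rmult_le_compat_l; [lra|]. apply Rinv_le_contravar; lra. }
  apply (Rmult_lt_reg_l b); [exact hb|].
  replace (b * (4 / D0)) with (2 * b * (2 / D0)) by (field; lra).
  assert (0 < 2 / D) by (apply Rdiv_lt_0_compat; lra).
  apply Rlt_le_trans with (1 := hdM).
  apply Rle_trans with (2 * b * (2 / D)); [apply Rmult_le_compat_r|apply Rmult_le_compat_l]; lra.
Qed.

Lemma ln_ratio_lt : p <> 0 -> p <= 1 ->
  Rpower (D0 + 2) p <= 2 * Rpower A p -> Rpower D0 p <= 2 * Rpower B p ->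
  ln B - ln A < 4 / D0.
Proof.
  intros hp0 hp1 hA2 hB2.
  destruct (Rlt_or_le 0 p) as [hp | hp].
  - apply ln_ratio_lt_pos; [lra | exact hA2].
  - apply ln_ratio_lt_neg; [lra | exact hB2].
Qed.

End PowerSumEquation.

Lemma rpow_nonzero s e : s <> 0 -> rpow s e = Rpower s e.
Proof. intros hs. unfold rpow. destruct (Req_EM_T s 0); [contradiction | reflexivity]. Qed.

Lemma Lp_nonzero_coords p a b : a <> 0 -> b <> 0 ->
  Lp p (a, b) = Rpower (Rpower (Rabs a) p + Rpower (Rabs b) p) (1 / p).
Proof.
  intros ha hb.
  assert (E : rpow (rpow (Rabs a) p + rpow (Rabs b) p) (1 / p) =
              Rpower (Rpower (Rabs a) p + Rpower (Rabs b) p) (1 / p)).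
  { rewrite (rpow_nonzero (Rabs a)), (rpow_nonzero (Rabs b)) by (apply Rabs_no_R0; auto).
    apply rpow_nonzero.
    pose proof (Rpower_pos (Rabs a) p). pose proof (Rpower_pos (Rabs b) p). lra. }
  unfold Lp. destruct (Rlt_dec p 0); [|exact E].
  destruct (Req_EM_T a 0); [contradiction|].
  destruct (Req_EM_T b 0); [contradiction | exact E].
Qed.

Lemma Rpower_inv_inj p s t : p <> 0 -> 0 < s -> 0 < t ->
  Rpower s (1 / p) = Rpower t (1 / p) -> s = t.
Proof.
  intros hp hs ht H.
  apply (f_equal (fun z => Rpower z p)) in H.
  rewrite !Rpower_mult in H.
  replace (1 / p * p) with 1 in H by (field; exact hp).
  rewrite !Rpower_1 in H; assumption.
Qed.

Lemma in_bisector_power_sum p u x y : p <> 0 -> -u < x < u -> 1 < y ->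
  in_bisector p (-u, -1) (u, 1) (x, y) ->
  Rpower (u + x) p + Rpower (y + 1) p = Rpower (u - x) p + Rpower (y - 1) p.
Proof.
  intros hp hx hy H.
  unfold in_bisector, vsub in H; cbn [fst snd] in H.
  rewrite !Lp_nonzero_coords in H by lra.
  replace (Rabs (-u - x)) with (u + x) in H by (rewrite Rabs_left; lra).
  replace (Rabs (-1 - y)) with (y + 1) in H by (rewrite Rabs_left; lra).
  replace (Rabs (u - x)) with (u - x) in H by (rewrite Rabs_right; lra).
  replace (Rabs (1 - y)) with (y - 1) in H by (rewrite Rabs_left; lra).
  apply Rpower_inv_inj in H; try assumption;
    apply Rplus_lt_0_compat; apply Rpower_pos.
Qed.

Theorem lemma6 (u x : R) (hu : 1 <= u) (hx1 : -u < x) (hx2 : x < 0) :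
  exists delta : R, 0 < delta /\
    forall p : R, p <> 0 -> Rabs p < delta ->
    forall y : R, 1 < y -> in_bisector p (-u, -1) (u, 1) (x, y) ->
      (1 < y /\ y < 2 * (- u / x) + 3) /\
      (1 < - u / x /\ - u / x < 2 * (- u / x) + 3).
Proof.
  set (h := - u / x).
  assert (hh : 1 < h).
  { pose proof (Rinv_lt_0_compat x hx2). assert (x * / x = 1) by (field; lra).
    unfold h, Rdiv. nra. }
  set (D0 := 2 * h + 2).
  assert (hgap : 1 - (u + x) / (u - x) = 4 / D0) by (unfold D0, h; field; lra).
  destruct (Rpower_le_2_mul_near_0 (D0 + 2) (u + x)) as [d1 [hd1 Hd1]];
    [unfold D0; lra | lra |].
  destruct (Rpower_le_2_mul_near_0 D0 (u - x)) as [d2 [hd2 Hd2]];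
    [unfold D0; lra | lra |].
  exists (Rmin 1 (Rmin d1 d2)). split.
  { repeat apply Rmin_glb_lt; lra. }
  intros p hp0 hpd y hy hbis.
  pose proof (Rmin_l 1 (Rmin d1 d2)). pose proof (Rmin_r 1 (Rmin d1 d2)).
  pose proof (Rmin_l d1 d2). pose proof (Rmin_r d1 d2). pose proof (Rle_abs p).
  split; [split; [exact hy|] | lra].
  destruct (Rlt_or_le y (2 * h + 3)) as [hlt | hge]; [exact hlt | exfalso].
  pose proof (in_bisector_power_sum p u x y hp0 ltac:(lra) hy hbis) as heq.
  replace (y + 1) with (y - 1 + 2) in heq by ring.
  pose proof (ln_ratio_lt (u + x) (u - x) D0 (y - 1) p
    ltac:(unfold D0; lra) ltac:(unfold D0; lra) heq hp0 ltac:(lra)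
    ltac:(apply Hd1; lra) ltac:(apply Hd2; lra)).
  pose proof (ln_sub_ge (u + x) (u - x) ltac:(lra) ltac:(lra)).
  lra.
Qed.
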